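(* Let $W$ be a finite set of possible worlds, let $G=(2^W,\gg)$ be a belief algebra on $W$, let $\Omega\subseteq\gg$, and let $\mathcal{A}$ be the set of all belief algebras on $W$ that contain $\Omega$. Then $\operatorname{Gen}(\Omega)$ is a belief algebra, and $\operatorname{Gen}(\Omega)=\bigcap\mathcal{A}$.
   Context: $R_W=\{(U,V)\mid U,V\subseteq W,\ U\cap V=\varnothing\}$. A belief algebra on $W$ is a pair $(2^W,\gg)$, $\gg$ a binary relation on $2^W$, such that for all $U,V,U_1,V_1,U_2,V_2\subseteq W$: (A0) $\gg\subseteq R_W$; (A1) $U\gg\varnothing$ iff $U\neq\varnothing$; (A2) if $U\gg V$ then not $V\gg U$; (A3) if $U_1\supseteq U$, $U\gg V$, $V\supseteq V_1$ and $U_1\cap V_1=\varnothing$, then $U_1\gg V_1$; (A4) if $U=U_1\cup V_1=U_2\cup V_2$, $U_1\gg V_1$ and $U_2\gg V_2$, then $U_1\cap U_2\gg V_1\cup V_2$. A belief algebra is identified with its relation $\gg$ as a set of pairs; ''contains $\Omega$'' means $\Omega\subseteq\gg$, and $\bigcap\mathcal{A}$ is the intersection of these sets of pairs. For $\Omega\subseteq R_W$, $\operatorname{Gen}(\Omega)$ is the smallest subset of $R_W$ that contains $\Omega$, contains $(U,\varnothing)$ for every nonempty $U\subseteq W$, and is closed under: if $(U,V)$ is in it, $U\subseteq U_1$, $V_1\subseteq V$ and $U_1\cap V_1=\varnothing$, then $(U_1,V_1)$ is in it; if $U_1\cup V_1=U_2\cup V_2$ and $(U_1,V_1),(U_2,V_2)$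 are in it, then $(U_1\cap U_2,V_1\cup V_2)$ is in it. *)

From mathcomp Require Import all_boot.
Set Implicit Arguments. Unset Strict Implicit. Unset Printing Implicit Defensive.

Definition brel (W : finType) := {set W} -> {set W} -> Prop.

Definition RW (W : finType) : brel W := fun U V => U :&: V = set0.

Definition sub_brel (W : finType) (r s : brel W) : Prop :=
  forall U V, r U V -> s U V.

Definition belief_algebra (W : finType) (gg : brel W) : Prop :=
  [/\ sub_brel gg (@RW W),
      (forall U : {set W}, gg U set0 <-> U <> set0),
      (forall U V, gg U V -> ~ gg V U),
      (forall U V U1 V1 : {set W},
                  U \subset U1 -> gg U V -> V1 \subset V -> U1 :&: V1 = set0 ->
                  gg U1 V1)
    & (forall U U1 V1 U2 V2 : {set W},
                  U = U1 :|: V1 -> U = U2 :|: V2 -> gg U1 V1 -> gg U2 V2 ->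
                  gg (U1 :&: U2) (V1 :|: V2))].

Inductive Gen (W : finType) (Om : brel W) : brel W :=
| Gen_base : forall U V, Om U V -> Gen Om U V
| Gen_empty : forall U : {set W}, U <> set0 -> Gen Om U set0
| Gen_mono : forall U V U1 V1 : {set W},
    Gen Om U V -> U \subset U1 -> V1 \subset V -> U1 :&: V1 = set0 ->
    Gen Om U1 V1
| Gen_meet : forall U1 V1 U2 V2 : {set W},
    U1 :|: V1 = U2 :|: V2 -> Gen Om U1 V1 -> Gen Om U2 V2 ->
    Gen Om (U1 :&: U2) (V1 :|: V2).

Definition bigcap_A (W : finType) (Om : brel W) : brel W :=
  fun U V => forall gg : brel W, belief_algebra gg -> sub_brel Om gg -> gg U V.

From mathcomp Require Import all_boot.
Set Implicit Arguments. Unset Strict Implicit. Unset Printing Implicit Defensive.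

(* Every belief algebra containing Omega satisfies the generating rules of
   Gen(Omega) (by A1, A3, A4), hence contains Gen(Omega).  So as soon as one such
   algebra exists, Gen(Omega) inherits A0 and A2 from it, while A1, A3, A4 hold
   by construction; being then itself a member of the family, it is its least
   element and therefore the intersection. *)

Section GeneratedBeliefAlgebra.

Variables (W : finType) (Om : brel W).

Lemma Gen_sub_belief_algebra (gg : brel W) :
  belief_algebra gg -> sub_brel Om gg -> sub_brel (Gen Om) gg.
Proof.
move=> [_ A1 _ A3 A4] sOm U V; elim=> {U V}.
- by move=> U V /sOm.
- by move=> U /A1.
- by move=> U V U1 V1 _ gUV sUU1 sV1V dis; apply: (A3 U V).
- by move=> U1 V1 U2 V2 eU _ g1 _ g2; apply: (A4 (U1 :|: V1)).
Qed.

Lemma belief_algebra_Gen (gg : brel W) :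
  belief_algebra gg -> sub_brel Om gg -> belief_algebra (Gen Om).
Proof.
move=> ba_gg sOm; have sGen := Gen_sub_belief_algebra ba_gg sOm.
case: ba_gg => [A0 A1 A2 _ _]; split.
- by move=> U V /sGen /A0.
- by move=> U; split; [move/sGen/A1 | apply: Gen_empty].
- by move=> U V /sGen gUV /sGen; apply: A2.
- by move=> U V U1 V1 sUU1 gUV sV1V dis; apply: (Gen_mono gUV).
- by move=> U U1 V1 U2 V2 -> eU g1 g2; apply: Gen_meet.
Qed.

Lemma Gen_bigcap_A :
  belief_algebra (Gen Om) -> forall U V, Gen Om U V <-> bigcap_A Om U V.
Proof.
move=> ba_Gen U V; split.
- by move=> gUV gg ba_gg sOm; apply: (Gen_sub_belief_algebra ba_gg sOm).
- by apply; last exact: Gen_base.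
Qed.

End GeneratedBeliefAlgebra.

Theorem corollary2 (W : finType) (gg Om : brel W) :
  belief_algebra gg -> sub_brel Om gg ->
  belief_algebra (Gen Om) /\ (forall U V, Gen Om U V <-> bigcap_A Om U V).
Proof.
move=> ba_gg sOm; have ba_Gen := belief_algebra_Gen ba_gg sOm.
by split; last exact: Gen_bigcap_A.
Qed.
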